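(* Let $D>0$ be a square-free integer. Let $z_1=\frac{a_1+b_1\sqrt{-D}}{c_1}$ and $z_2=\frac{a_2+b_2\sqrt{-D}}{c_2}$ be elements of $G_D(\mathbb{Q})$ with $a_i,b_i\in\mathbb{Z}$, $c_i$ positive integers, and $\gcd(a_1,b_1)=\gcd(a_2,b_2)=\gcd(c_1,c_2)=1$. Then $(a_1a_2-Db_1b_2)^2+D(a_1b_2+a_2b_1)^2=(c_1c_2)^2$, and $a_1a_2-Db_1b_2$ and $a_1b_2+a_2b_1$ are coprime; i.e. $(a_1a_2-Db_1b_2,\ a_1b_2+a_2b_1,\ c_1c_2)$ is a normalized solution (up to signs of the first two entries).
   Context: $G_D(\mathbb{Q}):=\{a+b\sqrt{-D}\in\mathbb{Q}[\sqrt{-D}]: a^2+Db^2=1\}$. A normalized solution of $x^2+Dy^2=z^2$ is a triple $(a,b,c)$ of natural numbers with $a^2+Db^2=c^2$ and $\gcd(a,b,c)=1$. *)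

From mathcomp Require Import all_boot all_order all_algebra.
Set Implicit Arguments. Unset Strict Implicit. Unset Printing Implicit Defensive.
Import Order.TTheory GRing.Theory Num.Theory.
Local Open Scope ring_scope.

Definition squarefree (n : nat) : Prop :=
  forall d : nat, (d * d %| n)%N -> d = 1%N.

(* Elements of Q[sqrt(-D)] are represented by their coordinates (x, y),
   standing for x + y * sqrt(-D).  G_D(Q) = { x + y sqrt(-D) : x^2 + D y^2 = 1 }. *)
Definition G_D (D : nat) : pred (rat * rat) :=
  fun z => z.1 ^+ 2 + D%:R * z.2 ^+ 2 == 1.

(* Write z1 z2 = (X + Y sqrt(-D)) / (c1 c2).  The norm is multiplicative, which
   gives X^2 + D Y^2 = (c1 c2)^2.  Multiplying z1 z2 by the conjugate of z1
   yields N(z1) z2, so every common divisor of X and Y divides c1^2 a2 and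
   c1^2 b2, hence c1^2 because a2 and b2 are coprime; symmetrically it divides
   c2^2, and c1^2, c2^2 are coprime. *)

From mathcomp Require Import all_boot all_order all_algebra.
From mathcomp Require Import ring.
Import Order.TTheory GRing.Theory Num.Theory.
Local Open Scope ring_scope.

Section ProductIdentities.

Variables (R : comPzRingType) (D a1 b1 a2 b2 : R).

Lemma brahmagupta_identity :
  (a1 * a2 - D * b1 * b2) ^+ 2 + D * (a1 * b2 + a2 * b1) ^+ 2
  = (a1 ^+ 2 + D * b1 ^+ 2) * (a2 ^+ 2 + D * b2 ^+ 2).
Proof. ring. Qed.

(* The two coordinates of conj(z1) * (z1 z2) = N(z1) z2. *)
Lemma conj_mul_prod_fst :
  (a1 ^+ 2 + D * b1 ^+ 2) * a2
  = a1 * (a1 * a2 - D * b1 * b2) + D * b1 * (a1 * b2 + a2 * b1).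
Proof. ring. Qed.

Lemma conj_mul_prod_snd :
  (a1 ^+ 2 + D * b1 ^+ 2) * b2
  = a1 * (a1 * b2 + a2 * b1) - b1 * (a1 * a2 - D * b1 * b2).
Proof. ring. Qed.

End ProductIdentities.

Lemma G_D_int (D : nat) (a b c : int) : c != 0 ->
  ((a%:~R / c%:~R : rat), (b%:~R / c%:~R : rat)) \in G_D D
  = (a ^+ 2 + D%:Z * b ^+ 2 == c ^+ 2).
Proof.
move=> c_neq0; rewrite unfold_in /G_D /=.
have c2_neq0 : (c%:~R : rat) ^+ 2 != 0 by rewrite expf_neq0 // intr_eq0.
rewrite -(inj_eq (mulfI c2_neq0)) mulr1.
have -> : (c%:~R : rat) ^+ 2 * ((a%:~R / c%:~R) ^+ 2 + D%:R * (b%:~R / c%:~R) ^+ 2)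
          = (a ^+ 2 + D%:Z * b ^+ 2)%:~R.
  by rewrite rmorphD rmorphM !rmorphXn /= -pmulrn; field; rewrite intr_eq0.
by rewrite -rmorphXn eqr_int.
Qed.

Lemma dvdz_norm_of_dvdz_prod (D a1 b1 a2 b2 d : int) :
  (d %| a1 * a2 - D * b1 * b2)%Z -> (d %| a1 * b2 + a2 * b1)%Z ->
  coprimez a2 b2 -> (d %| a1 ^+ 2 + D * b1 ^+ 2)%Z.
Proof.
move=> dX dY co2.
have dNa2 : (d %| (a1 ^+ 2 + D * b1 ^+ 2) * a2)%Z.
  by rewrite (@conj_mul_prod_fst _ D a1 b1 a2 b2) rpredD ?dvdz_mull.
have dNb2 : (d %| (a1 ^+ 2 + D * b1 ^+ 2) * b2)%Z.
  by rewrite (@conj_mul_prod_snd _ D a1 b1 a2 b2) rpredB ?dvdz_mull.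
have := dvdz_gcd d ((a1 ^+ 2 + D * b1 ^+ 2) * a2) ((a1 ^+ 2 + D * b1 ^+ 2) * b2).
rewrite dNa2 dNb2 -mulz_gcdr (eqP co2) mulr1.
by rewrite dvdzE absz_nat.
Qed.

Theorem lemma3p7 (D : nat) (a1 b1 c1 a2 b2 c2 : int) :
  (0 < D)%N -> squarefree D ->
  0 < c1 -> 0 < c2 ->
  ((a1%:~R / c1%:~R : rat), (b1%:~R / c1%:~R : rat)) \in G_D D ->
  ((a2%:~R / c2%:~R : rat), (b2%:~R / c2%:~R : rat)) \in G_D D ->
  coprimez a1 b1 -> coprimez a2 b2 -> coprimez c1 c2 ->
  (a1 * a2 - D%:Z * b1 * b2) ^+ 2 + D%:Z * (a1 * b2 + a2 * b1) ^+ 2 = (c1 * c2) ^+ 2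
  /\ coprimez (a1 * a2 - D%:Z * b1 * b2) (a1 * b2 + a2 * b1).
Proof.
move=> _ _ /lt0r_neq0 c1_neq0 /lt0r_neq0 c2_neq0.
rewrite !G_D_int // => /eqP N1 /eqP N2 co1 co2 co12.
split; first by rewrite brahmagupta_identity N1 N2 exprMn.
set X := a1 * a2 - _; set Y := a1 * b2 + _.
have gX := dvdz_gcdl X Y; have gY := dvdz_gcdr X Y.
have g_c1 : (gcdz X Y %| c1 ^+ 2)%Z.
  by rewrite -N1; exact: (@dvdz_norm_of_dvdz_prod _ a1 b1 a2 b2 _ gX gY co2).
have g_c2 : (gcdz X Y %| c2 ^+ 2)%Z.
  rewrite -N2; apply: (@dvdz_norm_of_dvdz_prod _ a2 b2 a1 b1 _ _ _ co1).
    by rewrite (mulrC a2) -mulrA (mulrC b2) mulrA.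
  by rewrite addrC.
have := dvdz_gcd (gcdz X Y) (c1 ^+ 2) (c2 ^+ 2).
rewrite g_c1 g_c2 (eqP (coprimezXr 2 (coprimezXl 2 co12))).
by rewrite dvdz1 absz_nat.
Qed.
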